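(* There is an absolute constant $C>0$ such that for every integer $N\ge 2$ and every integer $h$ with $0<|h|\le 2N^2$, \[ r_N(h) \le C N^2 \sum_{\substack{d\mid h\\ 1\le d\le N}} \frac{1}{d}, \qquad\text{and}\qquad r_N(0)\le C N^2\log N. \] Moreover, for every integer $k\ge 2$ there is a constant $C_k>0$ such that $I_k(N)\le C_k N^{2k+2}$ for all integers $N\ge 2$.
   Context: For a positive integer $N$ and $h\in\mathbb{Z}$, let $r_N(h)$ be the number of tuples $(a_1,a_2,a_3,a_4)\in([-N,N]\cap\mathbb{Z})^4$ with $a_1a_2-a_3a_4=h$. For an integer $k\ge 2$, let $I_k(N)=\sum_{h\in\mathbb{Z}} r_N(h)^k$. *)

From Stdlib Require Import ZArith Reals List.
Import ListNotations.
Open Scope Z_scope.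

Definition box (N : Z) : list Z :=
  map (fun i => i - N) (map Z.of_nat (seq 0 (Z.to_nat (2 * N + 1)))).

Definition rN (N h : Z) : nat :=
  length (filter (fun t : Z * Z * Z * Z =>
            let '(a1, a2, a3, a4) := t in Z.eqb (a1 * a2 - a3 * a4) h)
    (list_prod (list_prod (list_prod (box N) (box N)) (box N)) (box N))).

(* I_k(N) = sum_{h in Z} r_N(h)^k.  Since |a1 a2 - a3 a4| <= 2 N^2 for all
   tuples in the box, r_N(h) = 0 outside [-2N^2, 2N^2]; for k >= 1 those
   terms vanish, so the sum over Z equals this finite sum. *)
Definition Ik (k : nat) (N : Z) : nat :=
  fold_right Nat.add 0%nat
    (map (fun h => Nat.pow (rN N h) k) (box (2 * N * N))).

Definition divsum (N h : Z) : R :=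
  fold_right Rplus 0%R
    (map (fun d => (/ IZR d)%R)
       (filter (fun d => Z.eqb (h mod d) 0)
          (map (fun i => Z.of_nat i + 1) (seq 0 (Z.to_nat N))))).

(* Write a1 a2 - a3 a4 = h and, by the symmetry (a1, a3, h) <-> (a3, a1, -h), restrict to
   |a1| <= |a3|.  For fixed (a1, a3) with a3 <> 0, the admissible a2 form one residue class
   modulo |a3| / g, g = gcd(a1, a3), and exist only when g divides h; so there are at most
   1 + 2N g / |a3| solutions.  Bounding g / |a3| by the sum of d / |a3| over the common divisors
   d of a1, a3 and h, and then summing over the multiples a1, a3 of each d, gives
   r_N(h) <= 64 N^2 D(h) with D(h) = sum_{d | h, d <= N} 1/d; for h = 0, D(0) <= 1 + ln N.

   For the moments, r_N(h)^k <= (64 N^2)^k D(h)^k.  Expanding one factor D(h) at a time,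
   sum_{|h| <= 2N^2, L | h} D(h)^j <= c_j N^2 / L^(2^-j) + D(0)^j by induction on j, because
   lcm(L, d)^e >= (L d)^(e/2) and sum_d d^(-1-s) <= 1 + 1/s.  Finally D(0) <= N^(2/k) (1 + k/2),
   so D(0)^k <= (1 + k/2)^k N^2. *)

From Stdlib Require Import ZArith Reals List Lra Lia.
Import ListNotations.
Open Scope R_scope.

(** * Finite sums over lists *)

Definition rsum {A} (l : list A) (f : A -> R) : R := fold_right Rplus 0 (map f l).

Definition ind {A} (p : A -> bool) (x : A) : R := if p x then 1 else 0.

Lemma rsum_nil {A} (f : A -> R) : rsum [] f = 0.
Proof. reflexivity. Qed.

Lemma rsum_cons {A} (a : A) l f : rsum (a :: l) f = f a + rsum l f.
Proof. reflexivity. Qed.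

Lemma rsum_app {A} (l1 l2 : list A) f : rsum (l1 ++ l2) f = rsum l1 f + rsum l2 f.
Proof.
  induction l1 as [|a l1 IH]; cbn [app].
  - rewrite rsum_nil; lra.
  - rewrite !rsum_cons, IH; lra.
Qed.

Lemma rsum_map {A B} (g : B -> A) l f : rsum (map g l) f = rsum l (fun x => f (g x)).
Proof. unfold rsum. rewrite map_map. reflexivity. Qed.

Lemma rsum_ext {A} (l : list A) f g : (forall x, In x l -> f x = g x) -> rsum l f = rsum l g.
Proof.
  intros Hfg. unfold rsum. f_equal. apply map_ext_in. exact Hfg.
Qed.

Lemma rsum_le {A} (l : list A) f g : (forall x, In x l -> f x <= g x) -> rsum l f <= rsum l g.
Proof.
  induction l as [|a l IH]; intros Hfg.
  - rewrite !rsum_nil; lra.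
  - rewrite !rsum_cons. apply Rplus_le_compat.
    + apply Hfg. now left.
    + apply IH. intros x Hx. apply Hfg. now right.
Qed.

Lemma rsum_plus {A} (l : list A) f g : rsum l (fun x => f x + g x) = rsum l f + rsum l g.
Proof. induction l as [|a l IH]; [rewrite !rsum_nil | rewrite !rsum_cons, IH]; lra. Qed.

Lemma rsum_mult_l {A} (l : list A) c f : rsum l (fun x => c * f x) = c * rsum l f.
Proof. induction l as [|a l IH]; [rewrite !rsum_nil | rewrite !rsum_cons, IH]; lra. Qed.

Lemma rsum_const {A} (l : list A) c : rsum l (fun _ => c) = INR (length l) * c.
Proof.
  induction l as [|a l IH]; [rewrite rsum_nil; simpl; lra|].
  rewrite rsum_cons, IH, length_cons, S_INR. lra.
Qed.

Lemma rsum_zero {A} (l : list A) : rsum l (fun _ => 0) = 0.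
Proof. rewrite rsum_const. lra. Qed.

Lemma rsum_eq_0 {A} (l : list A) f : (forall x, In x l -> f x = 0) -> rsum l f = 0.
Proof. intros Hf. rewrite <- (rsum_zero l). now apply rsum_ext. Qed.

Lemma rsum_nonneg {A} (l : list A) f : (forall x, In x l -> 0 <= f x) -> 0 <= rsum l f.
Proof. intros Hf. rewrite <- (rsum_zero l). now apply rsum_le. Qed.

Lemma rsum_term_le {A} (l : list A) f a :
  (forall x, In x l -> 0 <= f x) -> In a l -> f a <= rsum l f.
Proof.
  induction l as [|b l IH]; intros Hf Ha; [destruct Ha|].
  rewrite rsum_cons.
  assert (0 <= f b) by (apply Hf; now left).
  assert (0 <= rsum l f) by (apply rsum_nonneg; intros; apply Hf; now right).
  destruct Ha as [<-|Ha]; [lra|].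
  enough (f a <= rsum l f) by lra.
  apply IH; auto. intros; apply Hf; now right.
Qed.

Lemma rsum_comm {A B} (l1 : list A) (l2 : list B) F :
  rsum l1 (fun x => rsum l2 (fun y => F x y)) = rsum l2 (fun y => rsum l1 (fun x => F x y)).
Proof.
  induction l1 as [|a l1 IH].
  - symmetry. exact (rsum_zero l2).
  - rewrite rsum_cons, IH, <- rsum_plus. reflexivity.
Qed.

Lemma rsum_mult_rsum {A B} (l1 : list A) (l2 : list B) f g :
  rsum l1 (fun x => rsum l2 (fun y => f x * g y)) = rsum l1 f * rsum l2 g.
Proof.
  rewrite Rmult_comm, <- rsum_mult_l. apply rsum_ext. intros x _.
  rewrite rsum_mult_l. apply Rmult_comm.
Qed.

Lemma rsum_list_prod {A B} (l1 : list A) (l2 : list B) F :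
  rsum (list_prod l1 l2) F = rsum l1 (fun x => rsum l2 (fun y => F (x, y))).
Proof.
  induction l1 as [|a l1 IH]; [reflexivity|].
  cbn [list_prod]. rewrite rsum_app, rsum_map, IH, rsum_cons. reflexivity.
Qed.

Lemma length_filter_rsum {A} (l : list A) p : INR (length (filter p l)) = rsum l (ind p).
Proof.
  induction l as [|a l IH]; [reflexivity|].
  rewrite rsum_cons. unfold ind at 1. cbn [filter].
  destruct (p a); rewrite ?length_cons, ?S_INR, IH; lra.
Qed.

Lemma rsum_ind_le_1 {A} (l : list A) (p : A -> bool) : NoDup l ->
  (forall a b, In a l -> In b l -> p a = true -> p b = true -> a = b) ->
  rsum l (ind p) <= 1.
Proof.
  intros Hl Hp. rewrite <- length_filter_rsum.
  destruct (filter p l) as [|a [|b l']] eqn:E; cbn [length INR]; [lra|lra|].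
  exfalso.
  assert (Ha : In a (filter p l)) by (rewrite E; now left).
  assert (Hb : In b (filter p l)) by (rewrite E; right; now left).
  apply filter_In in Ha as [Ha pa], Hb as [Hb pb].
  assert (Hnd : NoDup (filter p l)) by now apply NoDup_filter.
  rewrite E in Hnd. inversion Hnd as [|? ? Hnotin]; subst.
  apply Hnotin. left. symmetry. now apply Hp.
Qed.

Lemma ind_bounds {A} (p : A -> bool) x : 0 <= ind p x <= 1.
Proof. unfold ind. destruct (p x); lra. Qed.

Lemma INR_fold_add {A} (l : list A) (g : A -> nat) :
  INR (fold_right Nat.add 0%nat (map g l)) = rsum l (fun x => INR (g x)).
Proof.
  induction l as [|a l IH]; [reflexivity|].
  cbn [map fold_right]. rewrite plus_INR, IH. reflexivity.
Qed.

(** * Counting multiples and residue classes *)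

Definition divb (d n : Z) : bool := (n mod d =? 0)%Z.

Lemma divb_iff d n : d <> 0%Z -> divb d n = true <-> (d | n)%Z.
Proof. intros Hd. unfold divb. rewrite Z.eqb_eq. now apply Z.mod_divide. Qed.

(* The quotients (x + A) / m of the selected elements are distinct and lie in [0, 2A/m]. *)
Lemma count_congruent_le (l : list Z) (p : Z -> bool) (A m : Z) :
  NoDup l -> (0 < m)%Z -> (0 <= A)%Z ->
  (forall x, In x l -> p x = true -> (- A <= x <= A)%Z) ->
  (forall x y, In x l -> In y l -> p x = true -> p y = true -> (m | y - x)%Z) ->
  rsum l (ind p) <= 2 * IZR A / IZR m + 1.
Proof.
  intros Hl Hm HA Hbound Hcong. rewrite <- length_filter_rsum.
  set (q := fun x => Z.to_nat ((x + A) / m)).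
  assert (Hq_inj : NoDup (map q (filter p l))).
  { apply NoDup_map_NoDup_ForallPairs; [|now apply NoDup_filter].
    intros x y Hx Hy Hxy. apply filter_In in Hx as [Hx px], Hy as [Hy py].
    pose proof (Hbound x Hx px). pose proof (Hbound y Hy py).
    destruct (Hcong x y Hx Hy px py) as [t Ht]. unfold q in Hxy.
    assert (0 <= (x + A) / m)%Z by (apply Z.div_pos; lia).
    assert (0 <= (y + A) / m)%Z by (apply Z.div_pos; lia).
    pose proof (Z.div_mod (x + A) m ltac:(lia)). pose proof (Z.div_mod (y + A) m ltac:(lia)).
    pose proof (Z.mod_pos_bound (x + A) m Hm). pose proof (Z.mod_pos_bound (y + A) m Hm).
    assert (t = 0)%Z by nia. lia. }
  assert (Hq_range : incl (map q (filter p l)) (seq 0 (S (Z.to_nat (2 * A / m))))).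
  { intros z Hz. apply in_map_iff in Hz as [x [<- Hx]]. apply filter_In in Hx as [Hx px].
    pose proof (Hbound x Hx px). rewrite in_seq. unfold q.
    assert (0 <= (x + A) / m)%Z by (apply Z.div_pos; lia).
    assert ((x + A) / m <= 2 * A / m)%Z by (apply Z.div_le_mono; lia). lia. }
  pose proof (NoDup_incl_length Hq_inj Hq_range) as Hlen.
  rewrite length_map, length_seq in Hlen. apply le_INR in Hlen.
  rewrite S_INR, (INR_IZR_INZ (Z.to_nat _)), Z2Nat.id in Hlen by (apply Z.div_pos; lia).
  assert (Hdiv : IZR (2 * A / m) <= 2 * IZR A / IZR m).
  { assert (0 < IZR m) by now apply IZR_lt. apply Rmult_le_reg_l with (IZR m); [lra|].
    replace (IZR m * (2 * IZR A / IZR m)) with (IZR (2 * A)) by (rewrite mult_IZR; field; lra).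
    rewrite <- mult_IZR. apply IZR_le, Z.mul_div_le. lia. }
  lra.
Qed.

Lemma count_multiples_le (l : list Z) (d A : Z) : NoDup l -> (1 <= d)%Z -> (0 <= A)%Z ->
  rsum l (ind (fun x => (Z.abs x <=? A)%Z && divb d x)%bool) <= 2 * IZR A / IZR d + 1.
Proof.
  intros Hl Hd HA. apply count_congruent_le; [exact Hl | lia | exact HA | |].
  - intros x _ Hx. apply andb_prop in Hx as [Hx _]. apply Z.leb_le in Hx. lia.
  - intros x y _ _ Hx Hy. apply andb_prop in Hx as [_ Hx], Hy as [_ Hy].
    apply Z.divide_sub_r; apply divb_iff; auto; lia.
Qed.

Lemma In_box N x : (0 <= N)%Z -> In x (box N) <-> (- N <= x <= N)%Z.
Proof.
  intros HN. unfold box. rewrite map_map, in_map_iff. split.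
  - intros [i [<- Hi]]. rewrite in_seq in Hi. lia.
  - intros Hx. exists (Z.to_nat (x + N)). rewrite in_seq. lia.
Qed.

Lemma NoDup_box N : NoDup (box N).
Proof.
  unfold box. rewrite map_map. apply NoDup_map_NoDup_ForallPairs; [|apply seq_NoDup].
  intros i j _ _ Hij. lia.
Qed.

Lemma length_box N : (0 <= N)%Z -> INR (length (box N)) = 2 * IZR N + 1.
Proof.
  intros HN. unfold box. rewrite !length_map, length_seq, INR_IZR_INZ, Z2Nat.id by lia.
  rewrite plus_IZR, mult_IZR. reflexivity.
Qed.

Lemma count_multiples_box_le N d : (0 <= N)%Z -> (1 <= d)%Z ->
  rsum (box N) (ind (divb d)) <= 2 * IZR N / IZR d + 1.
Proof.
  intros HN Hd. rewrite <- (count_multiples_le (box N) d N (NoDup_box N)) by lia. right.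
  apply rsum_ext. intros y Hy. apply In_box in Hy; [|lia]. unfold ind.
  replace (Z.abs y <=? N)%Z with true by (symmetry; apply Z.leb_le; lia). reflexivity.
Qed.

(** * Harmonic and zeta sums *)

Definition range1 (N : Z) : list Z := map (fun i => Z.of_nat i + 1)%Z (seq 0 (Z.to_nat N)).

Lemma In_range1 N d : In d (range1 N) <-> (1 <= d <= N)%Z.
Proof.
  unfold range1. rewrite in_map_iff. split.
  - intros [i [<- Hi]]. rewrite in_seq in Hi. lia.
  - intros Hd. exists (Z.to_nat (d - 1)). rewrite in_seq. lia.
Qed.

Lemma range1_succ N : (0 <= N)%Z -> range1 (N + 1) = range1 N ++ [(N + 1)%Z].
Proof.
  intros HN. unfold range1. rewrite Z2Nat.inj_add, Nat.add_1_r, seq_S, map_app by lia.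
  cbn [map]. do 3 f_equal. lia.
Qed.

Lemma divsum_rsum N h : divsum N h = rsum (range1 N) (fun d => ind (divb d) h * / IZR d).
Proof.
  unfold divsum. fold (range1 N). induction (range1 N) as [|d l IH]; [reflexivity|].
  rewrite rsum_cons, <- IH. unfold ind, divb. cbn [filter].
  destruct (h mod d =? 0)%Z; cbn [map fold_right]; lra.
Qed.

Lemma divsum_0 N : divsum N 0 = rsum (range1 N) (fun d => / IZR d).
Proof.
  rewrite divsum_rsum. apply rsum_ext. intros d Hd. apply In_range1 in Hd.
  unfold ind, divb. rewrite Z.mod_0_l by lia. cbn. lra.
Qed.

Lemma divsum_ge_1 N h : (1 <= N)%Z -> 1 <= divsum N h.
Proof.
  intros HN. rewrite divsum_rsum.
  replace 1 with (ind (divb 1) h * / IZR 1)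
    by (unfold ind, divb; rewrite Z.mod_1_r; cbn; lra).
  apply (rsum_term_le _ (fun d => ind (divb d) h * / IZR d)); [|apply In_range1; lia].
  intros d Hd. apply In_range1 in Hd. unfold ind.
  assert (0 < / IZR d) by (apply Rinv_0_lt_compat, IZR_lt; lia).
  destruct (divb d h); lra.
Qed.

Lemma rsum_range1_telescope (f g : Z -> R) N : (1 <= N)%Z ->
  (forall x, (1 <= x)%Z -> f (x + 1)%Z <= g x - g (x + 1)%Z) ->
  rsum (range1 N) f <= f 1%Z + g 1%Z - g N.
Proof.
  intros HN Hstep. replace N with (Z.of_nat (Z.to_nat (N - 1)) + 1)%Z by lia.
  induction (Z.to_nat (N - 1)) as [|n IH].
  - change (rsum [1%Z] f <= f 1%Z + g 1%Z - g 1%Z). rewrite rsum_cons, rsum_nil. lra.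
  - rewrite Nat2Z.inj_succ, <- Z.add_1_r, range1_succ, rsum_app, rsum_cons, rsum_nil by lia.
    pose proof (Hstep (Z.of_nat n + 1)%Z ltac:(lia)). lra.
Qed.

Lemma inv_succ_le_ln_diff x : 0 < x -> / (x + 1) <= ln (x + 1) - ln x.
Proof.
  intros Hx.
  assert (Hq : 0 < x / (x + 1)) by (apply Rdiv_lt_0_compat; lra).
  assert (Hlog : ln (x / (x + 1)) <= x / (x + 1) - 1).
  { pose proof (exp_ineq1_le (ln (x / (x + 1)))). rewrite exp_ln in * by exact Hq. lra. }
  unfold Rdiv in Hlog. rewrite ln_mult, ln_Rinv in Hlog by (try apply Rinv_0_lt_compat; lra).
  replace (x * / (x + 1) - 1) with (- / (x + 1)) in Hlog by (field; lra). lra.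
Qed.

Lemma harmonic_le N : (1 <= N)%Z -> rsum (range1 N) (fun d => / IZR d) <= 1 + ln (IZR N).
Proof.
  intros HN.
  eapply Rle_trans; [apply (rsum_range1_telescope _ (fun x => - ln (IZR x))); auto|].
  - intros x Hx. rewrite plus_IZR.
    pose proof (inv_succ_le_ln_diff (IZR x) ltac:(apply IZR_lt; lia)). lra.
  - rewrite ln_1. lra.
Qed.

Lemma Rpower_pos x s : 0 < Rpower x s.
Proof. apply exp_pos. Qed.

Lemma Rpower_1_l s : Rpower 1 s = 1.
Proof. unfold Rpower. rewrite ln_1, Rmult_0_r. apply exp_0. Qed.

(* Rpower (x + 1) s = Rpower x s * exp (s (ln (x + 1) - ln x))
                   >= Rpower x s * (1 + s / (x + 1)). *)
Lemma zeta_step x s : 0 < x -> 0 < s ->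
  / ((x + 1) * Rpower (x + 1) s) <= (/ Rpower x s - / Rpower (x + 1) s) / s.
Proof.
  intros Hx Hs.
  set (a := Rpower x s). set (b := Rpower (x + 1) s).
  assert (Ha : 0 < a) by apply Rpower_pos.
  assert (Hb : 0 < b) by apply Rpower_pos.
  assert (Hratio : a * (1 + s / (x + 1)) <= b).
  { replace b with (a * exp (s * (ln (x + 1) - ln x)))
      by (unfold a, b, Rpower; rewrite <- exp_plus; f_equal; ring).
    apply Rmult_le_compat_l; [lra|].
    pose proof (exp_ineq1_le (s * (ln (x + 1) - ln x))).
    pose proof (inv_succ_le_ln_diff x Hx).
    assert (s * / (x + 1) <= s * (ln (x + 1) - ln x)) by (apply Rmult_le_compat_l; lra).
    unfold Rdiv. lra. }
  apply Rmult_le_reg_l with (s * a * b * (x + 1)); [repeat apply Rmult_lt_0_compat; lra|].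
  replace (s * a * b * (x + 1) * / ((x + 1) * b)) with (s * a) by (field; lra).
  replace (s * a * b * (x + 1) * ((/ a - / b) / s)) with ((b - a) * (x + 1)) by (field; lra).
  replace (a * (1 + s / (x + 1))) with (a + a * s / (x + 1)) in Hratio by (field; lra).
  assert (a * s / (x + 1) * (x + 1) = a * s) by (field; lra). nra.
Qed.

Lemma zeta_le N s : (1 <= N)%Z -> 0 < s ->
  rsum (range1 N) (fun d => / (IZR d * Rpower (IZR d) s)) <= 1 + / s.
Proof.
  intros HN Hs.
  eapply Rle_trans; [apply (rsum_range1_telescope _ (fun x => / Rpower (IZR x) s / s)); auto|].
  - intros x Hx. rewrite plus_IZR.
    pose proof (zeta_step (IZR x) s ltac:(apply IZR_lt; lia) Hs). unfold Rdiv in *. lra.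
  - assert (0 <= / Rpower (IZR N) s / s).
    { apply Rmult_le_pos; left; apply Rinv_0_lt_compat; auto using Rpower_pos. }
    cbv beta. change (IZR 1) with 1. rewrite Rpower_1_l, Rmult_1_l, Rinv_1. unfold Rdiv in *. lra.
Qed.

(** * The representation function r_N *)

Definition fiber (N h x y : Z) : R :=
  rsum (box N) (fun a2 => rsum (box N) (ind (fun a4 => (x * a2 - y * a4 =? h)%Z))).

Lemma rN_rsum N h :
  INR (rN N h) = rsum (box N) (fun a1 => rsum (box N) (fun a3 => fiber N h a1 a3)).
Proof.
  unfold rN. rewrite length_filter_rsum, !rsum_list_prod.
  apply rsum_ext. intros a1 _. apply rsum_comm.
Qed.

Lemma fiber_swap N h x y : fiber N h x y = fiber N (- h) y x.
Proof.
  unfold fiber. rewrite rsum_comm. apply rsum_ext; intros u _. apply rsum_ext; intros v _.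
  unfold ind. destruct (Z.eqb_spec (x * v - y * u) h), (Z.eqb_spec (y * u - x * v) (- h));
    lia || reflexivity.
Qed.

Lemma fiber_nonneg N h x y : 0 <= fiber N h x y.
Proof.
  apply rsum_nonneg; intros. apply rsum_nonneg; intros. unfold ind. destruct (_ =? _)%Z; lra.
Qed.

Lemma fiber_le_card N h x y : (0 <= N)%Z -> fiber N h x y <= (2 * IZR N + 1) ^ 2.
Proof.
  intros HN. unfold fiber.
  apply Rle_trans with (rsum (box N) (fun _ => rsum (box N) (fun _ => 1))).
  - apply rsum_le; intros. apply rsum_le; intros. unfold ind. destruct (_ =? _)%Z; lra.
  - rewrite !rsum_const, length_box by exact HN. lra.
Qed.

Definition rN_ordered (N h : Z) : R :=
  rsum (box N) (fun x => rsum (box N) (fun y =>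
    if (Z.abs x <=? Z.abs y)%Z then fiber N h x y else 0)).

Lemma rN_le_ordered N h : INR (rN N h) <= rN_ordered N h + rN_ordered N (- h).
Proof.
  unfold rN_ordered. rewrite rN_rsum, (rsum_comm (box N) (box N) (fun x y =>
    if (Z.abs x <=? Z.abs y)%Z then fiber N (- h) x y else 0)), <- rsum_plus.
  apply rsum_le; intros a1 _. rewrite <- rsum_plus. apply rsum_le; intros a3 _.
  rewrite <- fiber_swap. pose proof (fiber_nonneg N h a1 a3).
  destruct (Z.leb_spec (Z.abs a1) (Z.abs a3)), (Z.leb_spec (Z.abs a3) (Z.abs a1));
    first [lra | lia].
Qed.

Lemma fiber_le_residues N h x y : y <> 0%Z ->
  fiber N h x y <= rsum (box N) (ind (fun a2 => divb y (x * a2 - h))).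
Proof.
  intros Hy. unfold fiber. apply rsum_le. intros a2 _. unfold ind at 2.
  destruct (divb y (x * a2 - h)) eqn:Hdiv.
  - apply rsum_ind_le_1; [apply NoDup_box|].
    intros a b _ _ Ha Hb. apply Z.eqb_eq in Ha, Hb.
    apply (Z.mul_cancel_l _ _ y); lia.
  - rewrite rsum_eq_0; [lra|]. intros a4 _. unfold ind.
    destruct (Z.eqb_spec (x * a2 - y * a4) h); [|reflexivity].
    exfalso. assert (Hd : (y | x * a2 - h)%Z) by (exists a4; lia).
    apply divb_iff in Hd; congruence.
Qed.

Lemma gcd_pos_r x y : y <> 0%Z -> (0 < Z.gcd x y)%Z.
Proof.
  intros Hy. pose proof (Z.gcd_nonneg x y). enough (Z.gcd x y <> 0%Z) by lia.
  rewrite Z.gcd_eq_0. lia.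
Qed.

(* With g = gcd(x, y), the solutions a2 of x a2 = h (mod y) form one residue class
   modulo |y| / g when g divides h, and there are none otherwise. *)
Lemma fiber_le_gcd N h x y : (0 <= N)%Z -> y <> 0%Z ->
  fiber N h x y <=
  1 + 2 * IZR N * (ind (divb (Z.gcd x y)) h * (IZR (Z.gcd x y) / IZR (Z.abs y))).
Proof.
  intros HN Hy. eapply Rle_trans; [now apply fiber_le_residues|].
  destruct (Z.gcd_divide_l x y) as [xq Hxq], (Z.gcd_divide_r x y) as [yq Hyq].
  set (g := Z.gcd x y) in *.
  assert (Hg : (0 < g)%Z) by now apply gcd_pos_r.
  assert (Hcop : Z.gcd yq xq = 1%Z).
  { pose proof (Z.gcd_div_gcd x y g ltac:(lia) eq_refl) as Hc.
    rewrite Hxq, Hyq, !Z.div_mul, Z.gcd_comm in Hc by lia. exact Hc. }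
  assert (Hyq0 : (0 < Z.abs yq)%Z) by (destruct (Z.eq_dec yq 0) as [E|]; [rewrite E in Hyq|]; lia).
  unfold ind at 2. destruct (divb g h) eqn:Hgh.
  - assert (Hcount : rsum (box N) (ind (fun a2 => divb y (x * a2 - h)))
                     <= 2 * IZR N / IZR (Z.abs yq) + 1).
    { apply count_congruent_le; [apply NoDup_box | lia | exact HN | |].
      - intros a Ha _. apply In_box in Ha; lia.
      - intros a b _ _ Ha Hb. apply divb_iff in Ha, Hb; auto.
        apply Z.divide_abs_l, (Z.gauss _ xq); [|exact Hcop].
        destruct Ha as [ka Hka], Hb as [kb Hkb]. exists (kb - ka)%Z.
        apply (Z.mul_cancel_r _ _ g); lia. }
    assert (Habs : IZR (Z.abs y) = IZR (Z.abs yq) * IZR g)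
      by (rewrite <- mult_IZR; f_equal; rewrite Hyq, Z.abs_mul; lia).
    rewrite Habs. assert (0 < IZR g) by (apply IZR_lt; lia).
    assert (0 < IZR (Z.abs yq)) by (apply IZR_lt; lia).
    replace (2 * IZR N * (1 * (IZR g / (IZR (Z.abs yq) * IZR g))))
      with (2 * IZR N / IZR (Z.abs yq)) by (field; lra). lra.
  - assert (Hnone : rsum (box N) (ind (fun a2 => divb y (x * a2 - h))) = 0).
    { apply rsum_eq_0. intros a2 _. unfold ind.
      destruct (divb y (x * a2 - h)) eqn:Hdiv; [|reflexivity].
      exfalso. apply divb_iff in Hdiv; [|exact Hy]. destruct Hdiv as [k Hk].
      assert (Hd : (g | h)%Z) by (exists (xq * a2 - k * yq)%Z; lia).
      apply divb_iff in Hd; [congruence | lia]. }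
    rewrite Hnone. lra.
Qed.

(* For y = 0 the factor d / |y| is d / 0 = 0 in Rocq. *)
Definition pair_weight (d x y : Z) : R :=
  ind (divb d) x * ind (divb d) y * (IZR d / IZR (Z.abs y)).

Definition divisor_weight (N h x y : Z) : R :=
  rsum (range1 N) (fun d => ind (divb d) h * pair_weight d x y).

Lemma pair_weight_nonneg d x y : (0 <= d)%Z -> 0 <= pair_weight d x y.
Proof.
  intros Hd. unfold pair_weight.
  pose proof (ind_bounds (divb d) x). pose proof (ind_bounds (divb d) y).
  assert (0 <= IZR d / IZR (Z.abs y)).
  { destruct (Z.eq_dec y 0) as [->|Hy].
    - rewrite Z.abs_0. unfold Rdiv. rewrite Rinv_0. lra.
    - apply Rle_mult_inv_pos; [apply IZR_le | apply IZR_lt]; lia. }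
  apply Rmult_le_pos; [apply Rmult_le_pos|]; lra.
Qed.

Lemma divisor_weight_nonneg N h x y : 0 <= divisor_weight N h x y.
Proof.
  apply rsum_nonneg. intros d Hd. apply In_range1 in Hd.
  apply Rmult_le_pos; [apply ind_bounds | apply pair_weight_nonneg; lia].
Qed.

Lemma gcd_weight_le N h x y : y <> 0%Z -> (Z.abs y <= N)%Z ->
  ind (divb (Z.gcd x y)) h * (IZR (Z.gcd x y) / IZR (Z.abs y)) <= divisor_weight N h x y.
Proof.
  intros Hy HyN. set (g := Z.gcd x y).
  assert (Hg : (0 < g)%Z) by now apply gcd_pos_r.
  assert (Hgy : (g <= Z.abs y)%Z)
    by (apply Z.divide_pos_le; [lia | apply Z.divide_abs_r, Z.gcd_divide_r]).
  replace (ind (divb g) h * (IZR g / IZR (Z.abs y)))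
    with (ind (divb g) h * pair_weight g x y).
  - apply (rsum_term_le _ (fun d => ind (divb d) h * pair_weight d x y)); [|apply In_range1; lia].
    intros d Hd. apply In_range1 in Hd.
    apply Rmult_le_pos; [apply ind_bounds | apply pair_weight_nonneg; lia].
  - unfold pair_weight, ind.
    replace (divb g x) with true by (symmetry; apply divb_iff, Z.gcd_divide_l; lia).
    replace (divb g y) with true by (symmetry; apply divb_iff, Z.gcd_divide_r; lia).
    ring.
Qed.

Lemma pair_weight_rsum_le N d y : (1 <= d)%Z ->
  rsum (box N) (fun x => if (Z.abs x <=? Z.abs y)%Z then pair_weight d x y else 0)
  <= 3 * ind (divb d) y.
Proof.
  intros Hd. unfold pair_weight. unfold ind at 2 3. destruct (divb d y) eqn:Hdy.
  - rewrite (rsum_ext _ _ (fun x => IZR d / IZR (Z.abs y) *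
      ind (fun x => (Z.abs x <=? Z.abs y)%Z && divb d x)%bool x)).
    2:{ intros x _. unfold ind. destruct (Z.abs x <=? Z.abs y)%Z, (divb d x); cbn; ring. }
    rewrite rsum_mult_l.
    destruct (Z.eq_dec y 0) as [->|Hy].
    + rewrite Z.abs_0. unfold Rdiv. rewrite Rinv_0. lra.
    + assert (Hdy' : (d <= Z.abs y)%Z).
      { apply Z.divide_pos_le; [lia|]. apply Z.divide_abs_r, divb_iff; auto. lia. }
      pose proof (count_multiples_le (box N) d (Z.abs y) (NoDup_box N) Hd ltac:(lia)).
      assert (0 < IZR d) by (apply IZR_lt; lia).
      assert (IZR d <= IZR (Z.abs y)) by (apply IZR_le; lia).
      apply Rle_trans with (IZR d / IZR (Z.abs y) * (2 * IZR (Z.abs y) / IZR d + 1)).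
      * apply Rmult_le_compat_l; [apply Rle_mult_inv_pos; lra | assumption].
      * replace (IZR d / IZR (Z.abs y) * (2 * IZR (Z.abs y) / IZR d + 1))
          with (2 + IZR d / IZR (Z.abs y)) by (field; lra).
        enough (IZR d / IZR (Z.abs y) <= 1) by lra.
        apply Rmult_le_reg_r with (IZR (Z.abs y)); [lra|].
        unfold Rdiv. rewrite Rmult_assoc, Rinv_l; lra.
  - rewrite rsum_eq_0; [lra|]. intros x _. destruct (Z.abs x <=? Z.abs y)%Z; ring.
Qed.

Lemma divisor_weight_rsum_le N h : (1 <= N)%Z ->
  rsum (box N) (fun x => rsum (box N) (fun y =>
    if (Z.abs x <=? Z.abs y)%Z then divisor_weight N h x y else 0))
  <= 9 * IZR N * divsum N h.
Proof.
  intros HN.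
  set (W d y x := if (Z.abs x <=? Z.abs y)%Z then pair_weight d x y else 0).
  assert (Hswap : rsum (box N) (fun x => rsum (box N) (fun y =>
      if (Z.abs x <=? Z.abs y)%Z then divisor_weight N h x y else 0))
    = rsum (range1 N) (fun d => ind (divb d) h * rsum (box N) (fun y => rsum (box N) (W d y)))).
  { rewrite (rsum_ext _ _ (fun x => rsum (range1 N) (fun d => rsum (box N) (fun y =>
      ind (divb d) h * W d y x)))).
    - rewrite rsum_comm. apply rsum_ext. intros d _.
      rewrite rsum_comm, <- rsum_mult_l. apply rsum_ext. intros y _.
      rewrite <- rsum_mult_l. reflexivity.
    - intros x _. rewrite <- rsum_comm. apply rsum_ext. intros y _. unfold W.
      destruct (Z.abs x <=? Z.abs y)%Z; [reflexivity|].
      symmetry. apply rsum_eq_0. intros. ring. }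
  rewrite Hswap, divsum_rsum, <- rsum_mult_l. apply rsum_le. intros d Hd.
  apply In_range1 in Hd.
  pose proof (count_multiples_box_le N d ltac:(lia) ltac:(lia)).
  assert (Hinner : rsum (box N) (fun y => rsum (box N) (W d y)) <= 9 * IZR N / IZR d).
  { apply Rle_trans with (rsum (box N) (fun y => 3 * ind (divb d) y)).
    - apply rsum_le. intros y _. apply pair_weight_rsum_le. lia.
    - rewrite rsum_mult_l.
      assert (0 < IZR d <= IZR N) by (split; [apply IZR_lt | apply IZR_le]; lia).
      assert (1 <= IZR N / IZR d).
      { apply Rmult_le_reg_r with (IZR d); [lra|].
        unfold Rdiv. rewrite Rmult_assoc, Rinv_l; lra. }
      unfold Rdiv in *. lra. }
  pose proof (ind_bounds (divb d) h).
  assert (0 <= rsum (box N) (fun y => rsum (box N) (W d y))).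
  { apply rsum_nonneg. intros y _. apply rsum_nonneg. intros x _. unfold W.
    destruct (Z.abs x <=? Z.abs y)%Z; [apply pair_weight_nonneg; lia | lra]. }
  unfold Rdiv in Hinner.
  replace (9 * IZR N * (ind (divb d) h * / IZR d))
    with (ind (divb d) h * (9 * IZR N * / IZR d)) by ring.
  apply Rmult_le_compat_l; lra.
Qed.

(* Among the pairs with |x| <= |y|, only (0, 0) has y = 0; its fiber is bounded by the full
   count. *)
Lemma ordered_fiber_le N h x y : (0 <= N)%Z -> In y (box N) ->
  (if (Z.abs x <=? Z.abs y)%Z then fiber N h x y else 0)
  <= (2 * IZR N + 1) ^ 2 * ind (Z.eqb 0) x * ind (Z.eqb 0) y + 1
     + 2 * IZR N * (if (Z.abs x <=? Z.abs y)%Z then divisor_weight N h x y else 0).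
Proof.
  intros HN Hy. apply In_box in Hy; [|exact HN].
  pose proof (ind_bounds (Z.eqb 0) x). pose proof (ind_bounds (Z.eqb 0) y).
  assert (0 <= (2 * IZR N + 1) ^ 2 * ind (Z.eqb 0) x * ind (Z.eqb 0) y)
    by (apply Rmult_le_pos; [apply Rmult_le_pos; [apply pow2_ge_0 | lra] | lra]).
  assert (0 <= IZR N) by (apply IZR_le; lia).
  destruct (Z.leb_spec (Z.abs x) (Z.abs y)).
  - pose proof (divisor_weight_nonneg N h x y).
    assert (0 <= 2 * IZR N * divisor_weight N h x y) by (apply Rmult_le_pos; lra).
    destruct (Z.eq_dec y 0) as [->|Hy0].
    + assert (x = 0%Z) by lia; subst x. unfold ind. cbn [Z.eqb].
      pose proof (fiber_le_card N h 0 0 HN). lra.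
    + pose proof (fiber_le_gcd N h x y HN Hy0).
      pose proof (gcd_weight_le N h x y Hy0 ltac:(lia)).
      assert (2 * IZR N * (ind (divb (Z.gcd x y)) h * (IZR (Z.gcd x y) / IZR (Z.abs y)))
              <= 2 * IZR N * divisor_weight N h x y) by (apply Rmult_le_compat_l; lra).
      lra.
  - lra.
Qed.

Lemma rN_ordered_le N h : (1 <= N)%Z ->
  rN_ordered N h <= 2 * (2 * IZR N + 1) ^ 2 + 18 * IZR N ^ 2 * divsum N h.
Proof.
  intros HN. set (c := (2 * IZR N + 1) ^ 2).
  eapply Rle_trans.
  { apply rsum_le. intros x _. apply rsum_le. intros y Hy.
    apply (ordered_fiber_le N h x y ltac:(lia) Hy). }
  fold c.
  rewrite (rsum_ext _ _ (fun x => rsum (box N) (fun y => c * ind (Z.eqb 0) x * ind (Z.eqb 0) y)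
    + rsum (box N) (fun _ => 1)
    + 2 * IZR N * rsum (box N) (fun y =>
        if (Z.abs x <=? Z.abs y)%Z then divisor_weight N h x y else 0)))
    by (intros x _; rewrite <- rsum_mult_l, <- !rsum_plus; reflexivity).
  rewrite !rsum_plus, rsum_mult_l, rsum_mult_rsum, rsum_mult_l, !rsum_const, length_box by lia.
  assert (Hzero : rsum (box N) (ind (Z.eqb 0)) <= 1).
  { apply rsum_ind_le_1; [apply NoDup_box|]. intros a b _ _ Ha Hb.
    apply Z.eqb_eq in Ha, Hb. congruence. }
  assert (0 <= rsum (box N) (ind (Z.eqb 0))) by (apply rsum_nonneg; intros; apply ind_bounds).
  assert (0 <= c) by apply pow2_ge_0.
  assert (c * rsum (box N) (ind (Z.eqb 0)) * rsum (box N) (ind (Z.eqb 0)) <= c)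
    by (rewrite Rmult_assoc; apply Rle_trans with (c * 1); [apply Rmult_le_compat_l|]; nra).
  replace ((2 * IZR N + 1) * ((2 * IZR N + 1) * 1)) with c by (unfold c; ring).
  pose proof (divisor_weight_rsum_le N h HN).
  assert (0 <= IZR N) by (apply IZR_le; lia).
  assert (2 * IZR N * rsum (box N) (fun x => rsum (box N) (fun y =>
            if (Z.abs x <=? Z.abs y)%Z then divisor_weight N h x y else 0))
          <= 2 * IZR N * (9 * IZR N * divsum N h)) by (apply Rmult_le_compat_l; lra).
  lra.
Qed.

Lemma divsum_opp N h : divsum N (- h) = divsum N h.
Proof.
  rewrite !divsum_rsum. apply rsum_ext. intros d Hd. apply In_range1 in Hd. unfold ind.
  replace (divb d (- h)) with (divb d h); [reflexivity|].
  apply Bool.eq_iff_eq_true. rewrite !divb_iff by lia. symmetry. apply Z.divide_opp_r.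
Qed.

Lemma rN_le_divsum N h : (2 <= N)%Z -> INR (rN N h) <= 64 * IZR N ^ 2 * divsum N h.
Proof.
  intros HN. eapply Rle_trans; [apply rN_le_ordered|].
  pose proof (rN_ordered_le N h ltac:(lia)).
  pose proof (rN_ordered_le N (- h) ltac:(lia)). rewrite divsum_opp in *.
  pose proof (divsum_ge_1 N h ltac:(lia)).
  assert (2 <= IZR N) by (apply IZR_le; lia).
  assert (IZR N ^ 2 <= IZR N ^ 2 * divsum N h) by nra.
  nra.
Qed.

(** * Moments of the divisor sum *)

Lemma divb_lcm L d h : L <> 0%Z -> d <> 0%Z ->
  divb (Z.lcm L d) h = (divb L h && divb d h)%bool.
Proof.
  intros HL Hd. apply Bool.eq_iff_eq_true.
  rewrite Bool.andb_true_iff, !divb_iff, Z.lcm_divide_iff by (rewrite ?Z.lcm_eq_0; tauto).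
  reflexivity.
Qed.

Definition divisor_moment (N : Z) (j : nat) (L : Z) : R :=
  rsum (box (2 * N * N)) (fun h => ind (divb L) h * divsum N h ^ j).

Lemma divisor_moment_succ N j L : (1 <= L)%Z ->
  divisor_moment N (S j) L
  = rsum (range1 N) (fun d => / IZR d * divisor_moment N j (Z.lcm L d)).
Proof.
  intros HL. unfold divisor_moment.
  rewrite (rsum_ext (range1 N) _ (fun d => rsum (box (2 * N * N)) (fun h =>
    / IZR d * (ind (divb (Z.lcm L d)) h * divsum N h ^ j)))) by (intros; now rewrite rsum_mult_l).
  rewrite rsum_comm. apply rsum_ext. intros h _.
  rewrite <- tech_pow_Rmult. set (D := divsum N h ^ j). rewrite divsum_rsum.
  replace (ind (divb L) h * (rsum (range1 N) (fun d => ind (divb d) h * / IZR d) * D))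
    with (ind (divb L) h * D * rsum (range1 N) (fun d => ind (divb d) h * / IZR d)) by ring.
  rewrite <- rsum_mult_l. apply rsum_ext. intros d Hd. apply In_range1 in Hd.
  unfold ind. rewrite divb_lcm by lia. destruct (divb L h), (divb d h); cbn; ring.
Qed.

Lemma lcm_ge_l L d : (1 <= L)%Z -> (1 <= d)%Z -> (L <= Z.lcm L d)%Z.
Proof.
  intros HL Hd. apply Z.divide_pos_le; [|apply Z.divide_lcm_l].
  pose proof (Z.lcm_nonneg L d). enough (Z.lcm L d <> 0%Z) by lia.
  rewrite Z.lcm_eq_0. lia.
Qed.

(* lcm(L, d) >= L and lcm(L, d) >= d, so lcm(L, d) ^ e >= L ^ (e/2) * d ^ (e/2). *)
Lemma Rpower_lcm_inv_le L d e : (1 <= L)%Z -> (1 <= d)%Z -> 0 < e ->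
  / Rpower (IZR (Z.lcm L d)) e <= / Rpower (IZR L) (e / 2) * / Rpower (IZR d) (e / 2).
Proof.
  intros HL Hd He.
  pose proof (lcm_ge_l L d HL Hd) as HLl.
  pose proof (lcm_ge_l d L Hd HL) as Hdl. rewrite Z.lcm_comm in Hdl.
  rewrite <- Rinv_mult. apply Rinv_le_contravar.
  { apply Rmult_lt_0_compat; apply Rpower_pos. }
  replace (Rpower (IZR (Z.lcm L d)) e)
    with (Rpower (IZR (Z.lcm L d)) (e / 2) * Rpower (IZR (Z.lcm L d)) (e / 2))
    by (rewrite <- Rpower_plus; f_equal; field).
  apply Rmult_le_compat; try (left; apply Rpower_pos);
    apply Rle_Rpower_l; try lra; split; try apply IZR_lt; try apply IZR_le; lia.
Qed.

Lemma lcm_zeta_le N L e : (1 <= N)%Z -> (1 <= L)%Z -> 0 < e ->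
  rsum (range1 N) (fun d => / IZR d * / Rpower (IZR (Z.lcm L d)) e)
  <= / Rpower (IZR L) (e / 2) * (1 + 2 / e).
Proof.
  intros HN HL He.
  apply Rle_trans with (rsum (range1 N) (fun d =>
    / Rpower (IZR L) (e / 2) * / (IZR d * Rpower (IZR d) (e / 2)))).
  - apply rsum_le. intros d Hd. apply In_range1 in Hd.
    pose proof (Rpower_lcm_inv_le L d e HL ltac:(lia) He).
    assert (0 < / IZR d) by (apply Rinv_0_lt_compat, IZR_lt; lia).
    rewrite Rinv_mult.
    replace (/ Rpower (IZR L) (e / 2) * (/ IZR d * / Rpower (IZR d) (e / 2)))
      with (/ IZR d * (/ Rpower (IZR L) (e / 2) * / Rpower (IZR d) (e / 2))) by ring.
    apply Rmult_le_compat_l; lra.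
  - rewrite rsum_mult_l. apply Rmult_le_compat_l; [left; apply Rinv_0_lt_compat, Rpower_pos|].
    replace (2 / e) with (/ (e / 2)) by (field; lra). apply zeta_le; [exact HN | lra].
Qed.

Definition moment_exponent (j : nat) : R := (/ 2) ^ j.

Fixpoint moment_const (j : nat) : R :=
  match j with
  | O => 2
  | S j => moment_const j * (1 + 2 / moment_exponent j)
  end.

Lemma moment_exponent_pos j : 0 < moment_exponent j.
Proof. apply pow_lt. lra. Qed.

Lemma moment_const_pos j : 0 < moment_const j.
Proof.
  induction j as [|j IH]; cbn [moment_const]; [lra|].
  pose proof (moment_exponent_pos j).
  apply Rmult_lt_0_compat; [exact IH|].
  assert (0 < 2 / moment_exponent j) by (apply Rdiv_lt_0_compat; lra). lra.
Qed.

(* The term divsum N 0 ^ j accounts for h = 0, which every L divides. *)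
Lemma divisor_moment_le N j L : (1 <= N)%Z -> (1 <= L)%Z ->
  divisor_moment N j L
  <= moment_const j * IZR (2 * N * N) / Rpower (IZR L) (moment_exponent j) + divsum N 0 ^ j.
Proof.
  intros HN. revert L. induction j as [|j IH]; intros L HL.
  - unfold divisor_moment, moment_exponent. cbn [moment_const pow].
    rewrite Rpower_1 by (apply IZR_lt; lia).
    rewrite (rsum_ext _ _ (ind (divb L))) by (intros; ring).
    pose proof (count_multiples_box_le (2 * N * N) L ltac:(lia) HL). lra.
  - set (X := IZR (2 * N * N)). set (e := moment_exponent j).
    assert (HX : 0 <= X) by (apply IZR_le; lia).
    assert (He : 0 < e) by apply moment_exponent_pos.
    pose proof (moment_const_pos j) as Hc.
    rewrite divisor_moment_succ by exact HL.
    apply Rle_trans with (rsum (range1 N) (fun d =>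
      moment_const j * X * (/ IZR d * / Rpower (IZR (Z.lcm L d)) e) + divsum N 0 ^ j * / IZR d)).
    { apply rsum_le. intros d Hd. apply In_range1 in Hd.
      assert (Hlcm : (1 <= Z.lcm L d)%Z) by (pose proof (lcm_ge_l L d HL ltac:(lia)); lia).
      pose proof (IH (Z.lcm L d) Hlcm) as Hrec.
      assert (0 < / IZR d) by (apply Rinv_0_lt_compat, IZR_lt; lia).
      replace (moment_const j * X * (/ IZR d * / Rpower (IZR (Z.lcm L d)) e)
               + divsum N 0 ^ j * / IZR d)
        with (/ IZR d * (moment_const j * X / Rpower (IZR (Z.lcm L d)) e + divsum N 0 ^ j))
        by (unfold Rdiv; ring).
      apply Rmult_le_compat_l; [lra | exact Hrec]. }
    rewrite rsum_plus, rsum_mult_l, rsum_mult_l, <- divsum_0.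
    pose proof (lcm_zeta_le N L e HN HL He).
    assert (moment_const j * X * rsum (range1 N) (fun d => / IZR d * / Rpower (IZR (Z.lcm L d)) e)
            <= moment_const j * X * (/ Rpower (IZR L) (e / 2) * (1 + 2 / e)))
      by (apply Rmult_le_compat_l; [apply Rmult_le_pos|]; lra).
    replace (moment_exponent (S j)) with (e / 2) by (unfold e, moment_exponent; cbn; field).
    cbn [moment_const pow]. fold e. unfold Rdiv at 1.
    replace (moment_const j * (1 + 2 / e) * X * / Rpower (IZR L) (e / 2))
      with (moment_const j * X * (/ Rpower (IZR L) (e / 2) * (1 + 2 / e))) by ring.
    lra.
Qed.

Lemma harmonic_pow_le N k : (1 <= N)%Z -> (1 <= k)%nat ->
  divsum N 0 ^ k <= (1 + INR k / 2) ^ k * IZR N ^ 2.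
Proof.
  intros HN Hk. set (s := 2 / INR k).
  assert (Hk0 : 0 < INR k) by (apply lt_0_INR; lia).
  assert (Hs : 0 < s) by (apply Rdiv_lt_0_compat; lra).
  assert (HN0 : 0 < IZR N) by (apply IZR_lt; lia).
  assert (Hsum : divsum N 0 <= Rpower (IZR N) s * (1 + INR k / 2)).
  { rewrite divsum_0.
    apply Rle_trans with (rsum (range1 N) (fun d =>
      Rpower (IZR N) s * / (IZR d * Rpower (IZR d) s))).
    - apply rsum_le. intros d Hd. apply In_range1 in Hd.
      assert (0 < IZR d) by (apply IZR_lt; lia).
      assert (Rpower (IZR d) s <= Rpower (IZR N) s)
        by (apply Rle_Rpower_l; [lra | split; [lra | apply IZR_le; lia]]).
      pose proof (Rpower_pos (IZR d) s).
      replace (/ IZR d) with (Rpower (IZR d) s * / (IZR d * Rpower (IZR d) s)) at 1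
        by (field; lra).
      apply Rmult_le_compat_r; [left; apply Rinv_0_lt_compat, Rmult_lt_0_compat|]; lra.
    - rewrite rsum_mult_l. apply Rmult_le_compat_l; [left; apply Rpower_pos|].
      replace (INR k / 2) with (/ s) by (unfold s; field; lra). now apply zeta_le. }
  pose proof (divsum_ge_1 N 0 HN).
  eapply Rle_trans; [apply pow_incr; split; [lra | exact Hsum]|].
  rewrite Rpow_mult_distr, Rmult_comm. apply Rmult_le_compat_l.
  { apply pow_le. pose proof (pos_INR k). lra. }
  rewrite <- Rpower_pow, Rpower_mult by apply Rpower_pos.
  replace (s * INR k) with (INR 2) by (unfold s; cbn; field; lra).
  rewrite Rpower_pow by exact HN0. lra.
Qed.

Lemma Ik_le_moment k N : (2 <= N)%Z ->
  INR (Ik k N) <= (64 * IZR N ^ 2) ^ k * divisor_moment N k 1.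
Proof.
  intros HN. unfold Ik, divisor_moment. rewrite INR_fold_add, <- rsum_mult_l.
  apply rsum_le. intros h _.
  replace (ind (divb 1) h) with 1 by (unfold ind, divb; now rewrite Z.mod_1_r).
  rewrite pow_INR, Rmult_1_l, <- Rpow_mult_distr.
  apply pow_incr. split; [apply pos_INR | now apply rN_le_divsum].
Qed.

Lemma rN_le_divsum_and_log :
  exists C : R, 0 < C /\
    forall N : Z, (2 <= N)%Z ->
      (forall h : Z, (0 < Z.abs h <= 2 * N ^ 2)%Z -> INR (rN N h) <= C * IZR N ^ 2 * divsum N h) /\
      INR (rN N 0) <= C * IZR N ^ 2 * ln (IZR N).
Proof.
  exists 192. split; [lra|]. intros N HN.
  assert (HN2 : 2 <= IZR N) by (apply IZR_le; lia).
  assert (0 <= IZR N ^ 2) by nra.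
  split.
  - intros h _. pose proof (rN_le_divsum N h HN). pose proof (divsum_ge_1 N h ltac:(lia)). nra.
  - pose proof (rN_le_divsum N 0 HN). rewrite divsum_0 in *.
    pose proof (harmonic_le N ltac:(lia)).
    assert (Hln : / 2 < ln (IZR N)).
    { pose proof ln_lt_2. destruct (Req_dec (IZR N) 2) as [->|Hne]; [lra|].
      pose proof (ln_increasing 2 (IZR N) ltac:(lra) ltac:(lra)). lra. }
    assert (64 * IZR N ^ 2 * rsum (range1 N) (fun d => / IZR d)
            <= 64 * IZR N ^ 2 * (3 * ln (IZR N))) by (apply Rmult_le_compat_l; lra).
    lra.
Qed.

Lemma Ik_le_pow :
  forall k : nat, (2 <= k)%nat ->
    exists Ck : R, 0 < Ck /\
      forall N : Z, (2 <= N)%Z -> INR (Ik k N) <= Ck * IZR N ^ (2 * k + 2).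
Proof.
  intros k Hk.
  exists (64 ^ k * (2 * moment_const k + (1 + INR k / 2) ^ k)). split.
  { pose proof (moment_const_pos k). pose proof (pos_INR k).
    assert (0 < (1 + INR k / 2) ^ k) by (apply pow_lt; lra).
    apply Rmult_lt_0_compat; [apply pow_lt|]; lra. }
  intros N HN.
  pose proof (divisor_moment_le N k 1 ltac:(lia) ltac:(lia)) as Hmoment.
  pose proof (harmonic_pow_le N k ltac:(lia) ltac:(lia)) as Hharm.
  change (IZR 1) with 1 in Hmoment. rewrite Rpower_1_l in Hmoment.
  replace (IZR (2 * N * N)) with (2 * IZR N ^ 2) in Hmoment by (rewrite !mult_IZR; ring).
  assert (Hpos : 0 <= (64 * IZR N ^ 2) ^ k) by (apply pow_le; nra).
  eapply Rle_trans; [apply Ik_le_moment; exact HN|].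
  eapply Rle_trans; [apply Rmult_le_compat_l; [exact Hpos | exact Hmoment]|].
  replace (64 ^ k * (2 * moment_const k + (1 + INR k / 2) ^ k) * IZR N ^ (2 * k + 2))
    with ((64 * IZR N ^ 2) ^ k * ((2 * moment_const k + (1 + INR k / 2) ^ k) * IZR N ^ 2))
    by (rewrite pow_add, pow_mult, Rpow_mult_distr; ring).
  apply Rmult_le_compat_l; [exact Hpos|]. unfold Rdiv in Hmoment. rewrite Rinv_1 in Hmoment. lra.
Qed.

Theorem lemma1p5 :
  (exists C : R, (0 < C)%R /\
     forall N : Z, (2 <= N)%Z ->
       (forall h : Z, (0 < Z.abs h <= 2 * N ^ 2)%Z ->
          (INR (rN N h) <= C * IZR N ^ 2 * divsum N h)%R) /\
       (INR (rN N 0) <= C * IZR N ^ 2 * ln (IZR N))%R) /\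
  (forall k : nat, (2 <= k)%nat ->
     exists Ck : R, (0 < Ck)%R /\
       forall N : Z, (2 <= N)%Z ->
         (INR (Ik k N) <= Ck * IZR N ^ (2 * k + 2))%R).
Proof. split; [exact rN_le_divsum_and_log | exact Ik_le_pow]. Qed.
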